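(* Let $A \in \mathbb{Z}^{(n-2)\times n}$ be an integer matrix of rank $n-2$ with $\ker_{\mathbb{Z}} A \cap \mathbb{N}^n = \{0\}$, let $B$ be a Gale transform of $A$ whose rows $b_1,\dots,b_n$ are all nonzero, and let $\tilde B = \{\tilde b_1,\dots,\tilde b_n\} \subseteq \mathbb{Z}^2$ be the reduced Gale transform of $A$. If the toric ideal $I_A$ is strongly robust, then $\mathrm{conv}(\tilde B)$ is a two-dimensional polygon that is centrally symmetric about the origin, i.e. $\mathrm{conv}(\tilde B) = -\mathrm{conv}(\tilde B)$; equivalently, for every vertex $v$ of $\mathrm{conv}(\tilde B)$, $-v$ is also a vertex.
   Context: For $A \in \mathbb{Z}^{d\times n}$ of rank $d$, the toric ideal is $I_A = \langle p^u - p^v : u,v\in\mathbb{N}^n,\ Au = Av\rangle \subseteq \mathbb{K}[p_1,\dots,p_n]$, where $p^u=\prod_i p_i^{u_i}$. For $u \in \mathbb{N}^n$, its fiber is $\mathcal{F}(u)=\{v\in\mathbb{N}^n : Av = Au\}$. A binomial $p^u - p^v$ is indispensable if $\mathcal{F}(u)=\{u,v\}$ and $\mathrm{supp}(u)\cap\mathrm{supp}(v)=\emptyset$ (where $\mathrm{supp}(u)=\{i : u_i\neq 0\}$); the set of indispensable binomials is $\mathcal{S}(A)$. A binomial $p^u-p^v\in I_A$ is primitive if there is no other binomial $p^{u'}-p^{v'}\in I_A$ with $p^{u'}\mid p^u$ and $p^{v'}\mid p^v$; the Graver basis $\mathcal{G}r(A)$ is the set of primitive binomials of $I_A$. $I_A$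 is strongly robust if $\mathcal{S}(A)=\mathcal{G}r(A)$. A Gale transform of $A$ (rank $n-2$) is an $n\times 2$ integer matrix $B$ whose columns form a basis of the lattice $\ker_{\mathbb{Z}}A$; write its rows as $b_i=(b_{i1},b_{i2})$. The reduced Gale transform is $\tilde B=\{\tilde b_1,\dots,\tilde b_n\}$ with $\tilde b_i = \gcd(b_{i1},b_{i2})^{-1}(-b_{i2},b_{i1})$, i.e. each row rotated by $90^\circ$ and divided by the gcd of its entries. *)

From HB Require Import structures.
From mathcomp Require Import all_boot all_order all_algebra.
Set Implicit Arguments. Unset Strict Implicit. Unset Printing Implicit Defensive.
Import Order.TTheory GRing.Theory Num.Theory.
Local Open Scope ring_scope.

Definition natvec n (u : 'cV[int]_n) : Prop := forall i, 0 <= u i 0.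

Definition supp n (u : 'cV[int]_n) (i : 'I_n) : bool := u i 0 != 0.

Definition fiber d n (A : 'M[int]_(d, n)) (u v : 'cV[int]_n) : Prop :=
  natvec v /\ A *m v = A *m u.

(* The (nonzero) binomial p^u - p^v, encoded by the pair (u,v), lies in I_A. *)
Definition binom_in_IA d n (A : 'M[int]_(d, n)) (u v : 'cV[int]_n) : Prop :=
  [/\ natvec u, natvec v, u <> v & A *m u = A *m v].

Definition indispensable d n (A : 'M[int]_(d, n)) (u v : 'cV[int]_n) : Prop :=
  [/\ natvec u, natvec v, u <> v,
      (forall w, fiber A u w <-> (w = u \/ w = v))
    & (forall i, ~~ (supp u i && supp v i))].

Definition primitive d n (A : 'M[int]_(d, n)) (u v : 'cV[int]_n) : Prop :=
  binom_in_IA A u v /\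
  ~ (exists u' v' : 'cV[int]_n,
       [/\ binom_in_IA A u' v', (u', v') <> (u, v),
           (forall i, u' i 0 <= u i 0) & (forall i, v' i 0 <= v i 0)]).

Definition strongly_robust d n (A : 'M[int]_(d, n)) : Prop :=
  forall u v : 'cV[int]_n, indispensable A u v <-> primitive A u v.

Definition is_gale d n (A : 'M[int]_(d, n)) (B : 'M[int]_(n, 2)) : Prop :=
  A *m B = 0 /\
  forall x : 'cV[int]_n, A *m x = 0 -> exists! c : 'cV[int]_2, x = B *m c.

Definition c0 : 'I_2 := ord0.
Definition c1 : 'I_2 := ord_max.

Definition redgale n (B : 'M[int]_(n, 2)) (i : 'I_n) : 'rV[int]_2 :=
  let g := gcdz (B i c0) (B i c1) in
  \row_j (if j == c0 then - ((B i c1) %/ g)%Z else ((B i c0) %/ g)%Z).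

Definition rV_intR (R : realFieldType) (v : 'rV[int]_2) : 'rV[R]_2 :=
  map_mx (fun z : int => z%:~R) v.

Definition in_conv (R : realFieldType) n (P : 'I_n -> 'rV[R]_2) (x : 'rV[R]_2) : Prop :=
  exists l : 'I_n -> R,
    [/\ forall i, 0 <= l i, \sum_i l i = 1 & x = \sum_i l i *: P i].

(* conv(P) is two-dimensional: its affine hull (= that of P) is the plane. *)
Definition conv_dim2 (R : realFieldType) n (P : 'I_n -> 'rV[R]_2) : Prop :=
  exists i j k : 'I_n, \det (col_mx (P j - P i) (P k - P i)) != 0.

Definition rank_Q d n (A : 'M[int]_(d, n)) : nat :=
  \rank (map_mx (fun z : int => z%:~R : rat) A).

From HB Require Import structures.
From mathcomp Require Import all_boot all_order all_algebra.
From mathcomp Require Import zify ring lra.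
Import Order.TTheory GRing.Theory Num.Theory.
Set Implicit Arguments. Unset Strict Implicit. Unset Printing Implicit Defensive.
Local Open Scope ring_scope.

(* Write r_i for the reduced Gale vectors and g_i > 0 for the gcd of the i-th row of B,
   so that the lattice kernel of A is {B c} with (B c)_i = g_i det(c, r_i).  Fix k, put
   w = r_k and choose y with det(w, y) = 1.  The kernel vectors vanishing at k form the
   line Z x with x = B w, so p^(x+) - p^(x-) is primitive; by strong robustness it is
   indispensable, i.e. 0 and x are the only kernel vectors bounded above by x+.
   Applied to B (y + s w) for every integer s, this gives for each s an index violating
   the bound; a discrete intermediate value argument turns these into either some
   r_j = t w with t <= -1, or two vectors r_a, r_b on opposite sides of the line R w
   whose segment crosses it at t w with t <= -1.  Either way -r_k lies in conv(r), so
   the hull is centrally symmetric; it is two-dimensional because some r_j is not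
   parallel to r_k. *)

Lemma ord2P (i : 'I_2) : i = c0 \/ i = c1.
Proof. by case: i => [[|[|m]] Hm]; [left|right|] => //; apply: ord_inj. Qed.

Definition cross (R : comPzRingType) (u v : 'rV[R]_2) : R :=
  u 0 c0 * v 0 c1 - u 0 c1 * v 0 c0.

Section Cross.
Variable R : comPzRingType.
Implicit Types u v w y z : 'rV[R]_2.

Lemma crossxx u : cross u u = 0.
Proof. by rewrite /cross mulrC subrr. Qed.

Lemma crossC u v : cross u v = - cross v u.
Proof. by rewrite /cross; ring. Qed.

Lemma crossDZl u v (s : R) z : cross (u + s *: v) z = cross u z + s * cross v z.
Proof. by rewrite /cross !mxE; ring. Qed.

Lemma cross_sumr (I : finType) u (l : I -> R) (v : I -> 'rV[R]_2) :
  cross u (\sum_i l i *: v i) = \sum_i l i * cross u (v i).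
Proof.
rewrite /cross !summxE !mulr_sumr -sumrB; apply: eq_bigr => i _.
by rewrite !mxE; ring.
Qed.

Lemma cross_decomp w y z : cross w y = 1 -> z = cross z y *: w + cross w z *: y.
Proof.
move=> wy1; apply/rowP => i; rewrite !mxE.
transitivity (z 0 i * cross w y); first by rewrite wy1 mulr1.
by rewrite /cross; case: (ord2P i) => ->; ring.
Qed.

Lemma cross_comb w y u v : cross w y = 1 ->
  (- cross w v) *: u + cross w u *: v
    = (- cross w v * cross u y + cross w u * cross v y) *: w.
Proof.
move=> wy1; apply/rowP => i; rewrite !mxE.
transitivity ((- cross w v * u 0 i + cross w u * v 0 i) * cross w y).
  by rewrite wy1 mulr1.
by rewrite /cross; case: (ord2P i) => ->; ring.
Qed.

Lemma det_col_mx2 u v : \det (col_mx u v) = cross u v.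
Proof.
rewrite (expand_det_row _ 0) !big_ord_recl big_ord0 /cofactor !det_mx11.
have e2 : (lift ord0 ord0 : 'I_2) = c1 by apply: ord_inj.
have s0 : @split 1 1 0 = inl 0 by apply: (canLR unsplitK); apply: ord_inj.
have s1 : @split 1 1 c1 = inr 0 by apply: (canLR unsplitK); apply: ord_inj.
have e3 : (lift c1 0 : 'I_2) = c0 by apply: ord_inj.
rewrite !mxE /= e2 s0 s1 e3 expr0 expr1 /= /cross.
by rewrite mul1r mulN1r addr0 mulrN.
Qed.

End Cross.

Lemma map_cross (R : realFieldType) (u v : 'rV[int]_2) :
  cross (rV_intR R u) (rV_intR R v) = (cross u v)%:~R.
Proof. by rewrite /cross !mxE intrB !intrM. Qed.

Section ConvexHull.
Variables (R : realFieldType) (n : nat).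
Implicit Types (P : 'I_n -> 'rV[R]_2) (x : 'rV[R]_2).

Lemma in_conv_trans m P (Q : 'I_m -> 'rV[R]_2) x :
  (forall j, in_conv P (Q j)) -> in_conv Q x -> in_conv P x.
Proof.
move=> PQ [l [l0 l1 ->]]; have [mu Hmu] := fin_all_exists PQ.
exists (fun i => \sum_j l j * mu j i); split.
- move=> i; apply: sumr_ge0 => j _; apply: mulr_ge0 => //.
  by case: (Hmu j).
- rewrite exchange_big /= -l1; apply: eq_bigr => j _.
  by rewrite -mulr_sumr; case: (Hmu j) => _ -> _; rewrite mulr1.
- under [LHS]eq_bigr => j _ do (case: (Hmu j) => _ _ ->; rewrite scaler_sumr).
  rewrite exchange_big /=; apply: eq_bigr => i _.
  by rewrite scaler_suml; apply: eq_bigr => j _; rewrite scalerA.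
Qed.

Lemma in_conv_opp P x : in_conv P x -> in_conv (fun i => - P i) (- x).
Proof.
move=> [l [l0 l1 ->]]; exists l; split => //.
by rewrite -sumrN; apply: eq_bigr => i _; rewrite scalerN.
Qed.

Lemma in_conv_sym P :
  (forall i, in_conv P (- P i)) -> forall x, in_conv P x <-> in_conv P (- x).
Proof.
move=> sym; have opp x : in_conv P x -> in_conv P (- x).
  by move/in_conv_opp; apply: in_conv_trans.
by move=> x; split => [|/opp]; [apply: opp | rewrite opprK].
Qed.

Lemma in_conv3 P a b k (ca cb ck : R) :
  0 <= ca -> 0 <= cb -> 0 <= ck -> ca + cb + ck = 1 ->
  in_conv P (ca *: P a + cb *: P b + ck *: P k).
Proof.
move=> ha hb hk hs.
pose ind (h : 'I_n) (c : R) i := if i == h then c else 0.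
have sum_ind h c : \sum_i ind h c i = c.
  by rewrite (bigD1 h) //= /ind eqxx big1 ?addr0 // => i /negbTE ->.
have sum_indZ h c : \sum_i ind h c i *: P i = c *: P h.
  by rewrite (bigD1 h) //= /ind eqxx big1 ?addr0 // => i /negbTE ->; rewrite scale0r.
exists (fun i => ind a ca i + ind b cb i + ind k ck i); split.
- by move=> i; rewrite /ind !addr_ge0 //; case: ifP.
- by rewrite !big_split /= !sum_ind.
- under eq_bigr => i _ do rewrite !scalerDl.
  by rewrite !big_split /= !sum_indZ.
Qed.

(* The point (ma P a + mb P b) / (ma + mb) of the segment [P a, P b] is t P k with
   t <= -1, and -P k lies between t P k and P k. *)
Lemma in_conv_opp_of_line P a b k (ma mb m : R) :
  0 <= ma -> 0 <= mb -> 0 < ma + mb -> m <= - (ma + mb) ->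
  ma *: P a + mb *: P b = m *: P k -> in_conv P (- P k).
Proof.
move=> ha hb hS hm E.
have D0 : 0 < ma + mb - m by lra.
have Dn0 : ma + mb - m != 0 by rewrite gt_eqF.
have -> : - P k = (2 * ma / (ma + mb - m)) *: P a + (2 * mb / (ma + mb - m)) *: P b
                  + ((- (ma + mb) - m) / (ma + mb - m)) *: P k.
  apply/rowP => c; move/rowP: E => /(_ c); rewrite !mxE => E.
  transitivity ((2 * (ma * P a 0 c + mb * P b 0 c) + (- (ma + mb) - m) * P k 0 c)
                / (ma + mb - m)); first by rewrite E; field.
  by field.
apply: in_conv3; rewrite ?divr_ge0 ?mulr_ge0 ?(ltW D0) //; first lra.
by field.
Qed.

Lemma cross_in_conv P u p x :
  in_conv P x -> (forall i, cross u (P i - p) = 0) -> cross u (x - p) = 0.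
Proof.
move=> [l [_ l1 ->]] Pu.
have -> : \sum_i l i *: P i - p = \sum_i l i *: (P i - p).
  by under [RHS]eq_bigr do rewrite scalerBr; rewrite sumrB -scaler_suml l1 scale1r.
by rewrite cross_sumr big1 // => i _; rewrite Pu mulr0.
Qed.

Lemma conv_dim2_sym P k j :
  (forall i, in_conv P (- P i)) -> cross (P k) (P j) != 0 -> conv_dim2 P.
Proof.
move=> sym kj.
case: (pickP (fun m => cross (P j - P k) (P m - P k) != 0)) => [m jm | flat].
  by exists k, j, m; rewrite det_col_mx2.
have : cross (P j - P k) (- P k - P k) = 0.
  by apply: cross_in_conv (sym k) _ => i; apply/eqP; rewrite -[_ == _]negbK flat.
have -> : cross (P j - P k) (- P k - P k) = 2 * cross (P k) (P j).
  by rewrite /cross !mxE; ring.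
by move/eqP; rewrite mulf_eq0 pnatr_eq0 /= (negbTE kj).
Qed.

End ConvexHull.

Lemma in_conv_opp_of_line_int (R : realFieldType) n (V : 'I_n -> 'rV[int]_2) a b k
    (ma mb m : int) :
  0 <= ma -> 0 <= mb -> 0 < ma + mb -> m <= - (ma + mb) ->
  ma *: V a + mb *: V b = m *: V k ->
  in_conv (fun i => rV_intR R (V i)) (- rV_intR R (V k)).
Proof.
move=> ha hb hS hm E.
apply: (@in_conv_opp_of_line R n _ a b k ma%:~R mb%:~R m%:~R).
- by rewrite ler0z.
- by rewrite ler0z.
- by rewrite -intrD ltr0z.
- by rewrite -intrD -intrN ler_int.
- apply/rowP => c; move/rowP: E => /(_ c); rewrite !mxE => E.
  by rewrite -!intrM -intrD E.
Qed.

Definition pos_part n (x : 'cV[int]_n) : 'cV[int]_n := \col_i Num.max (x i 0) 0.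
Definition neg_part n (x : 'cV[int]_n) : 'cV[int]_n := pos_part (- x).

Lemma natvec_pos_part n (x : 'cV[int]_n) : natvec (pos_part x).
Proof. by move=> i; rewrite mxE le_max lexx orbT. Qed.

Lemma pos_sub_neg_part n (x : 'cV[int]_n) : pos_part x - neg_part x = x.
Proof.
by apply/matrixP => i j; rewrite /neg_part (ord1 j) !mxE; move: (x i 0) => a; lia.
Qed.

Lemma indispensable_parts_bound d n (A : 'M[int]_(d, n)) (x z : 'cV[int]_n) :
  indispensable A (pos_part x) (neg_part x) -> A *m z = 0 ->
  (forall j, z j 0 <= Num.max (x j 0) 0) -> z = 0 \/ z = x.
Proof.
move=> [_ _ _ fib _] Az zx.
have fz : fiber A (pos_part x) (pos_part x - z).
  split; last by rewrite mulmxBr Az subr0.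
  by move=> i; rewrite !mxE; have := zx i; move: (x i 0) (z i 0) => a b; lia.
have -> : z = pos_part x - (pos_part x - z) by rewrite opprB addrC subrK.
case/fib: fz => ->; first by left; rewrite subrr.
by right; rewrite pos_sub_neg_part.
Qed.

Section PrimitiveParts.
Variables (d n : nat) (A : 'M[int]_(d, n)) (x : 'cV[int]_n) (k : 'I_n).
Hypotheses (Ax : A *m x = 0) (x_neq0 : x != 0) (xk : x k 0 = 0).
Hypothesis line : forall y, A *m y = 0 -> y k 0 = 0 -> exists t : int, y = t *: x.

Lemma primitive_parts : primitive A (pos_part x) (neg_part x).
Proof.
have Auv : A *m pos_part x = A *m neg_part x.
  by apply/eqP; rewrite -subr_eq0 -mulmxBr pos_sub_neg_part Ax.
have uv : pos_part x <> neg_part x.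
  by move=> e; move: x_neq0; rewrite -(pos_sub_neg_part x) e subrr eqxx.
split; first by split => //; apply: natvec_pos_part.
move=> [u [v [[nu nv u_neq_v Auv'] not_parts le_u le_v]]].
have bounds i : [/\ 0 <= u i 0, 0 <= v i 0,
                    u i 0 <= Num.max (x i 0) 0 & v i 0 <= Num.max (- x i 0) 0].
  by move: (le_u i) (le_v i); rewrite /neg_part !mxE; split.
have [t yt] : exists t : int, u - v = t *: x.
  apply: line; first by rewrite mulmxBr Auv' subrr.
  by rewrite !mxE; have [] := bounds k; rewrite xk; move: (u k 0) (v k 0); lia.
have /cV0Pn[j xj] := x_neq0.
have : t = 0 \/ t = 1.
  move/matrixP: yt => /(_ j 0); rewrite !mxE.
  by have [] := bounds j; move: xj => /eqP; move: (u j 0) (v j 0) (x j 0); nia.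
case=> ht.
  by apply: u_neq_v; apply/eqP; rewrite -subr_eq0 yt ht scale0r.
apply: not_parts; congr pair; apply/matrixP => i j'; rewrite (ord1 j');
  move/matrixP: yt => /(_ i 0); rewrite !mxE ht mul1r;
  by have [] := bounds i; move: (u i 0) (v i 0) (x i 0); lia.
Qed.

Lemma strongly_robust_kernel_bound : strongly_robust A ->
  forall z, A *m z = 0 -> (forall j, z j 0 <= Num.max (x j 0) 0) -> z = 0 \/ z = x.
Proof. by move=> SR z; apply: indispensable_parts_bound; apply/SR/primitive_parts. Qed.

End PrimitiveParts.

Lemma int_step (p : pred int) (lo hi : int) :
  lo <= hi -> ~~ p lo -> p hi -> exists s, ~~ p s /\ p (s + 1).
Proof.
move=> lo_hi plo phi.
suff steps (m : nat) : p (lo + m%:Z) -> exists s, ~~ p s /\ p (s + 1).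
  by apply: (steps `|hi - lo|%N); rewrite (_ : lo + _ = hi) //; lia.
elim: m => [|m IH]; first by rewrite addr0 (negbTE plo).
case pm: (p (lo + m%:Z)); first by move=> _; apply: IH.
by move=> pm1; exists (lo + m%:Z); rewrite pm -addrA -[_ + 1]PoszD addn1.
Qed.

Lemma crossing_pair (I : finType) (al de : I -> int) :
  (forall s : int, exists j, Num.max (de j) 0 < s * de j - al j) ->
  (exists j, de j = 0 /\ al j < 0) \/
  exists a b (s : int), [/\ 0 < de a, de b < 0, al a < s * de a & al b < s * de b].
Proof.
move=> cover.
case: (pickP [pred j | (de j == 0) && (al j < 0)]) => [j /andP[/eqP ? ?]|no_zero].
  by left; exists j.
right.
pose rightP s := [exists a, (0 < de a) && (al a < s * de a)].
pose leftP s := [exists b, (de b < 0) && (al b < s * de b)].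
have cover' s : rightP (s - 1) || leftP s.
  have [j hj] := cover s; move/negbT: (no_zero j); rewrite /=.
  case: (ltgtP (de j) 0) => dj hz.
  - by apply/orP; right; apply/existsP; exists j; rewrite dj /=; lia.
  - by apply/orP; left; apply/existsP; exists j; rewrite dj /=; lia.
  - by move: hj hz; rewrite dj; lia.
pose K : int := 1 + \sum_j `|al j|.
have alK j : `|al j| < K.
  have rest : 0 <= \sum_(i | i != j) `|al i| by apply: sumr_ge0.
  by rewrite /K (bigD1 j) //= addrCA ltrDl (lt_le_trans ltr01) // lerDl.
have K0 : 0 <= K by rewrite /K addr_ge0 // sumr_ge0.
clearbody K.
have nR : ~~ rightP (- K).
  by apply/existsP => -[a /andP[da aa]]; have := alK a; nia.
have RK : rightP K.
  have := cover' (K + 1); rewrite addrK => /orP[//|/existsP[b /andP[db ab]]].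
  by have := alK b; nia.
have [s [nRs Rs1]] : exists s, ~~ rightP s /\ rightP (s + 1).
  by apply: int_step nR RK; move: K0; lia.
have Ls1 : leftP (s + 1) by have := cover' (s + 1); rewrite addrK (negbTE nRs).
case/existsP: Rs1 => a /andP[da aa]; case/existsP: Ls1 => b /andP[db ab].
by exists a, b, (s + 1).
Qed.

Definition row_gcd n (B : 'M[int]_(n, 2)) i : int := gcdz (B i c0) (B i c1).

Section GaleTransform.
Variables (d n : nat) (A : 'M[int]_(d, n)) (B : 'M[int]_(n, 2)).
Hypothesis gale : is_gale A B.

Lemma redgale_coords i :
  B i c0 = row_gcd B i * redgale B i 0 c1 /\ B i c1 = - (row_gcd B i * redgale B i 0 c0).
Proof.
rewrite /redgale !mxE /= mulrN opprK !(mulrC (row_gcd B i)).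
by rewrite !divzK ?dvdz_gcdl ?dvdz_gcdr.
Qed.

Lemma gale_coordE (z : 'rV[int]_2) j :
  (B *m z^T) j 0 = row_gcd B j * cross z (redgale B j).
Proof.
rewrite !mxE big_ord_recl big_ord1 !mxE.
have -> : lift ord0 ord0 = c1 :> 'I_2 by apply: ord_inj.
by have [-> ->] := redgale_coords j; rewrite /cross; ring.
Qed.

Lemma gale_in_ker (z : 'rV[int]_2) : A *m (B *m z^T) = 0.
Proof. by case: gale => AB0 _; rewrite mulmxA AB0 mul0mx. Qed.

Lemma gale_ker_param v : A *m v = 0 -> exists z : 'rV[int]_2, v = B *m z^T.
Proof. by case: gale => _ /(_ v) gv /gv [c [-> _]]; exists c^T; rewrite trmxK. Qed.

Lemma gale_mulmx_inj : injective (fun z : 'rV[int]_2 => B *m z^T).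
Proof.
move=> z z' /= E; case: gale => _ /(_ _ (gale_in_ker z)) [c [_ U]].
by apply: trmx_inj; rewrite -(U _ erefl) (U _ E).
Qed.

Hypothesis rowB : forall i, row i B != 0.

Lemma row_gcd_gt0 i : 0 < row_gcd B i.
Proof.
rewrite lt_def gcdz_eq0 (_ : 0 <= gcdz _ _) ?andbT //.
apply: contra (rowB i) => /andP[/eqP h0 /eqP h1].
by apply/eqP/rowP => j; rewrite !mxE; case: (ord2P j) => ->.
Qed.

Lemma redgale_bezout k : exists y, cross (redgale B k) y = 1.
Proof.
have [u [v uv]] := Bezoutz (B k c0) (B k c1).
exists (\row_j (if j == c0 then - u else - v)).
apply: (mulfI (lt0r_neq0 (row_gcd_gt0 k))); rewrite mulr1 [in RHS]/row_gcd -uv.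
by have [-> ->] := redgale_coords k; rewrite /cross !mxE /=; ring.
Qed.

Section ReducedGaleVector.
Variables (k : 'I_n) (y : 'rV[int]_2).
Hypothesis wy : cross (redgale B k) y = 1.
Hypothesis SR : strongly_robust A.

Let w := redgale B k.
Let x := B *m w^T.

Lemma gale_ker_line v : A *m v = 0 -> v k 0 = 0 -> exists t : int, v = t *: x.
Proof.
move=> /gale_ker_param [z ->]; rewrite gale_coordE => /eqP.
rewrite mulf_eq0 (gt_eqF (row_gcd_gt0 k)) /= => /eqP zw.
exists (cross z y).
rewrite {1}(cross_decomp z wy) (crossC w z) zw oppr0 scale0r addr0.
by rewrite linearZ /= scalemxAr.
Qed.

Lemma gale_generator_neq0 : x != 0.
Proof.
apply/eqP => x0.
have w0 : w = 0 by apply: gale_mulmx_inj; rewrite /= -/x x0 trmx0 mulmx0.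
by move: wy; rewrite -/w w0 /cross !mxE !mul0r subrr.
Qed.

Lemma gale_cover s : exists j,
  Num.max (cross w (redgale B j)) 0 < s * cross w (redgale B j) - cross (redgale B j) y.
Proof.
pose z := y + s *: w.
have wz : cross w z = 1 by rewrite crossC crossDZl crossxx mulr0 addr0 -crossC.
have [j zj] : exists j, Num.max (x j 0) 0 < (B *m z^T) j 0.
  case: (pickP (fun j => Num.max (x j 0) 0 < (B *m z^T) j 0)) => [j|small].
    by exists j.
  have xk : x k 0 = 0 by rewrite gale_coordE crossxx mulr0.
  have below j : (B *m z^T) j 0 <= Num.max (x j 0) 0 by rewrite leNgt small.
  have [z0|zx] := strongly_robust_kernel_bound (gale_in_ker w) gale_generator_neq0 xk
                    gale_ker_line SR (gale_in_ker z) below.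
    have z0' : z = 0 by apply: gale_mulmx_inj; rewrite /= z0 trmx0 mulmx0.
    by move: wz; rewrite z0' /cross !mxE !mulr0 subrr.
  have zw : z = w by exact: gale_mulmx_inj zx.
  by move: wz; rewrite zw crossxx.
exists j; move: zj; rewrite !gale_coordE crossDZl (crossC y) -/w.
rewrite -[X in Num.max _ X](mulr0 (row_gcd B j)) -maxr_pMr ?ltW ?row_gcd_gt0 //.
by rewrite ltr_pM2l ?row_gcd_gt0 // addrC.
Qed.

Lemma redgale_nonparallel : exists j, cross w (redgale B j) != 0.
Proof.
have /cV0Pn[j] := gale_generator_neq0.
by rewrite gale_coordE mulf_eq0 negb_or => /andP[_ ?]; exists j.
Qed.

(* By cross_decomp, the coordinates of r_j in the basis (w, y) are
   (cross r_j y, cross w r_j). *)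
Lemma opp_redgale_in_conv (R : realFieldType) :
  in_conv (fun i => rV_intR R (redgale B i)) (- rV_intR R (redgale B k)).
Proof.
case: (crossing_pair gale_cover) => [[j [de0 al_neg]] | [a [b [s [da db sa sb]]]]].
  apply: (@in_conv_opp_of_line_int R n _ j j k 1 0 (cross (redgale B j) y)) => //.
  rewrite scale1r scale0r addr0 {1}(cross_decomp (redgale B j) wy).
  by rewrite de0 scale0r addr0.
apply: in_conv_opp_of_line_int (@cross_comb _ w y (redgale B a) (redgale B b) wy);
  move: da db sa sb; rewrite -/w;
  move: (cross w (redgale B a)) (cross w (redgale B b)) (cross _ y) (cross _ y); nia.
Qed.

End ReducedGaleVector.
End GaleTransform.

Theorem theorem1p1 (R : realFieldType) (n : nat) (A : 'M[int]_(n - 2, n))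
    (B : 'M[int]_(n, 2)) :
  (2 <= n)%N ->
  rank_Q A = (n - 2)%N ->
  (forall u : 'cV[int]_n, A *m u = 0 -> natvec u -> u = 0) ->
  is_gale A B ->
  (forall i : 'I_n, row i B != 0) ->
  strongly_robust A ->
  let P := fun i : 'I_n => rV_intR R (redgale B i) in
  conv_dim2 P /\ (forall x : 'rV[R]_2, in_conv P x <-> in_conv P (- x)).
Proof.
move=> n2 _ _ gale rowB SR P.
have sym i : in_conv P (- P i).
  have [y wy] := redgale_bezout rowB i.
  exact: (opp_redgale_in_conv gale rowB wy SR R).
split; last exact: in_conv_sym.
pose k : 'I_n := Ordinal (ltnW n2).
have [y wy] := redgale_bezout rowB k.
have [j kj] := redgale_nonparallel gale wy.
by apply: (conv_dim2_sym (k := k) (j := j) sym); rewrite map_cross intr_eq0.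
Qed.
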